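(* Let $\alpha,\beta,\mu\in\mathbb{R}\setminus\{0\}$ with $\Delta:=\alpha^2+\beta^2-2\mu^2>0$, $x_1,x_2\in\mathbb{R}$, and let $B_\mu=B_{\alpha,\beta,\mu}$ be the Gardner breather. Then its mass is $$M[B_\mu]:=\frac12\int_{\mathbb{R}}B_\mu^2(t,x)\,dx=4\beta+2\sqrt2\,\mu\arctan\Big(\frac{2\sqrt2\,\mu\beta}{\Delta}\Big).$$
   Context: Gardner breather: with $\delta:=\alpha^2-3\beta^2$, $\gamma:=3\alpha^2-\beta^2$, $y_1:=x+\delta t+x_1$, $y_2:=x+\gamma t+x_2$, $$G_\mu:=\frac{\beta\sqrt{\alpha^2+\beta^2}}{\alpha\sqrt{\Delta}}\sin(\alpha y_1)-\frac{\sqrt2\,\mu\beta\, e^{\beta y_2}}{\Delta},\qquad F_\mu:=\cosh(\beta y_2)-\frac{\sqrt2\,\mu\beta\,[\alpha\cos(\alpha y_1)-\beta\sin(\alpha y_1)]}{\alpha\sqrt{\alpha^2+\beta^2}\sqrt{\Delta}},$$ $B_{\alpha,\beta,\mu}(t,x;x_1,x_2):=2\sqrt2\,\partial_x[\arctan(G_\mu/F_\mu)]=2\sqrt2\frac{F_\mu\partial_xG_\mu-G_\mu\partial_xF_\mu}{F_\mu^2+G_\mu^2}$, a solution of $w_t+(w_{xx}+3\mu w^2+w^3)_x=0$. *)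

From Stdlib Require Import Reals.
From Coquelicot Require Import Coquelicot.
Open Scope R_scope.

Definition gb_delta (a b : R) : R := a ^ 2 - 3 * b ^ 2.
Definition gb_gamma (a b : R) : R := 3 * a ^ 2 - b ^ 2.
Definition gb_Delta (a b mu : R) : R := a ^ 2 + b ^ 2 - 2 * mu ^ 2.

Definition gb_y1 (a b x1 t x : R) : R := x + gb_delta a b * t + x1.
Definition gb_y2 (a b x2 t x : R) : R := x + gb_gamma a b * t + x2.

Definition gb_G (a b mu x1 x2 t x : R) : R :=
  b * sqrt (a ^ 2 + b ^ 2) / (a * sqrt (gb_Delta a b mu)) * sin (a * gb_y1 a b x1 t x)
  - sqrt 2 * mu * b * exp (b * gb_y2 a b x2 t x) / gb_Delta a b mu.

Definition gb_F (a b mu x1 x2 t x : R) : R :=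
  cosh (b * gb_y2 a b x2 t x)
  - sqrt 2 * mu * b * (a * cos (a * gb_y1 a b x1 t x) - b * sin (a * gb_y1 a b x1 t x))
    / (a * sqrt (a ^ 2 + b ^ 2) * sqrt (gb_Delta a b mu)).

Definition breather (a b mu x1 x2 t x : R) : R :=
  let G := fun y => gb_G a b mu x1 x2 t y in
  let F := fun y => gb_F a b mu x1 x2 t y in
  2 * sqrt 2 * (F x * Derive G x - G x * Derive F x) / (F x ^ 2 + G x ^ 2).

From Stdlib Require Import Reals Lra.
From Coquelicot Require Import Coquelicot.
Open Scope R_scope.

(* With W = F G' - G F' and D = F^2 + G^2 the mass density B^2 / 2 is 4 W^2 / D^2.
   The breather satisfies the bilinear identity
   F'^2 + G'^2 - F F'' - G G'' + sqrt 2 mu W = 0, which together with Lagrange's identity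
   D (F'^2 + G'^2) = (F F' + G G')^2 + W^2 makes 4 W^2 / D^2 the derivative of
   (log D)' - 2 sqrt 2 mu arg (F + i G).  The argument is continuous along the line because
   F > 0 wherever G = 0.  The mass is the jump of this primitive: multiplying F, G and their
   derivatives by exp (-/+ b y2) makes both ends explicit, with limits -2 b at -oo and
   2 b + 2 sqrt 2 mu atan (2 sqrt 2 mu b / Delta) at +oo. *)

(* Half the argument of p + i q, smooth away from the half-line q = 0, p <= 0. *)
Definition half_arg (p q : R) : R := atan (q / (sqrt (p ^ 2 + q ^ 2) + p)).

Lemma norm2_pos (p q : R) : (q = 0 -> 0 < p) -> 0 < p ^ 2 + q ^ 2.
Proof.
intros Hp; destruct (Req_dec q 0) as [Hq | Hq].
- specialize (Hp Hq); subst q; nra.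
- pose proof (pow2_gt_0 q Hq); nra.
Qed.

Lemma half_arg_denom_pos (p q : R) : (q = 0 -> 0 < p) -> 0 < sqrt (p ^ 2 + q ^ 2) + p.
Proof.
intros Hp; pose proof (norm2_pos p q Hp) as HD.
pose proof (sqrt_sqrt _ (Rlt_le _ _ HD)); pose proof (sqrt_pos (p ^ 2 + q ^ 2)).
destruct (Req_dec q 0) as [Hq | Hq].
- specialize (Hp Hq); lra.
- pose proof (pow2_gt_0 q Hq); nra.
Qed.

Lemma circle_param (p q S : R) :
  S * S = p ^ 2 + q ^ 2 -> 0 < S -> 0 < S + p ->
  let w := q / (S + p) in
  p = S * (1 - w ^ 2) / (1 + w ^ 2) /\ q = 2 * S * w / (1 + w ^ 2).
Proof.
intros HS Sp Sq w.
assert (Hw : (1 + w ^ 2) * (S + p) = 2 * S).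
{ unfold w; field_simplify_eq; [nra | lra]. }
assert (Hq : q = w * (S + p)) by (unfold w; field; lra).
assert (0 < 1 + w ^ 2) by nra.
split; apply (Rmult_eq_reg_r (1 + w ^ 2)); try lra;
  unfold Rdiv; rewrite Rmult_assoc, Rinv_l, Rmult_1_r by lra.
- replace (S * (1 - w ^ 2)) with (2 * S - S * (1 + w ^ 2)) by ring; rewrite <- Hw; ring.
- rewrite Hq at 1; rewrite <- Hw; ring.
Qed.

Lemma is_derive_half_arg (F G : R -> R) (y f1 g1 : R) :
  is_derive F y f1 -> is_derive G y g1 -> (G y = 0 -> 0 < F y) ->
  is_derive (fun z => half_arg (F z) (G z)) y
    ((F y * g1 - G y * f1) / (2 * (F y ^ 2 + G y ^ 2))).
Proof.
intros dF dG Hpos.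
pose proof (norm2_pos _ _ Hpos) as HD.
pose proof (half_arg_denom_pos _ _ Hpos) as HS.
unfold half_arg; auto_derive.
{ repeat split; try (eexists; eassumption);
  replace (F y * (F y * 1) + G y * (G y * 1)) with (F y ^ 2 + G y ^ 2) by ring; lra. }
change (Derive (fun z => F z) y) with (Derive F y).
change (Derive (fun z => G z) y) with (Derive G y).
rewrite (is_derive_unique _ _ _ dF), (is_derive_unique _ _ _ dG).
replace (F y * (F y * 1) + G y * (G y * 1)) with (F y ^ 2 + G y ^ 2) by ring.
assert (HSS := sqrt_sqrt _ (Rlt_le _ _ HD)).
assert (Sp := sqrt_lt_R0 _ HD).
destruct (circle_param (F y) (G y) _ HSS Sp HS) as [HF HG].
set (S := sqrt (F y ^ 2 + G y ^ 2)) in *; set (w := G y / (S + F y)) in *.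
clearbody S w; rewrite HF, HG.
assert (0 < 1 + w ^ 2) by nra.
field; repeat split; nra.
Qed.

Lemma half_arg_scale (l p q : R) : 0 < l -> half_arg (l * p) (l * q) = half_arg p q.
Proof.
intros Hl; unfold half_arg.
replace ((l * p) ^ 2 + (l * q) ^ 2) with (l ^ 2 * (p ^ 2 + q ^ 2)) by ring.
pose proof (pow2_ge_0 p); pose proof (pow2_ge_0 q).
rewrite sqrt_mult, sqrt_pow2 by (try apply pow2_ge_0; lra).
destruct (Req_dec (sqrt (p ^ 2 + q ^ 2) + p) 0) as [Hz | Hz].
- replace (l * sqrt (p ^ 2 + q ^ 2) + l * p) with (l * 0) by (rewrite <- Hz; ring).
  rewrite Hz, Rmult_0_r; unfold Rdiv; rewrite Rinv_0, !Rmult_0_r; reflexivity.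
- f_equal; rewrite <- Rmult_plus_distr_l; field; split; lra.
Qed.

Lemma half_arg_0 (p : R) : half_arg p 0 = 0.
Proof. unfold half_arg, Rdiv; rewrite Rmult_0_l; apply atan_0. Qed.

(* The half-angle formula tan (2 th) = 2 tan th / (1 - tan th ^ 2), with th in (-pi/4, pi/4). *)
Lemma half_arg_1 (u : R) : 2 * half_arg 1 u = atan u.
Proof.
unfold half_arg; rewrite pow1.
set (S := sqrt (1 + u ^ 2)).
assert (HS : S * S = 1 + u ^ 2) by (apply sqrt_sqrt; nra).
assert (S0 : 0 <= S) by apply sqrt_pos.
assert (S1 : 1 <= S) by nra.
set (w := u / (S + 1)).
assert (Hu : u = w * (S + 1)) by (unfold w; field; lra).
assert (Hw : 1 - w * w = 2 / (S + 1)).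
{ apply (Rmult_eq_reg_r (S + 1)); [| lra].
  field_simplify; [| lra]. rewrite Hu in HS. nra. }
assert (wb : -1 < w < 1).
{ assert (uS : - (S + 1) < u < S + 1) by (split; nra).
  rewrite Hu in uS; split; nra. }
pose proof PI_RGT_0.
assert (Ha : - (PI / 4) < atan w < PI / 4).
{ rewrite <- atan_1, <- atan_opp; split; apply atan_increasing; lra. }
rewrite <- (atan_tan (2 * atan w)) by lra.
f_equal; rewrite tan_2a, tan_atan.
- rewrite Hw, Hu; field; lra.
- apply Rgt_not_eq, cos_gt_0; lra.
- apply Rgt_not_eq, cos_gt_0; lra.
- rewrite tan_atan; nra.
Qed.

Definition mass_density (p q p1 q1 : R) : R :=
  4 * (p * q1 - q * p1) ^ 2 / (p ^ 2 + q ^ 2) ^ 2.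

Definition mass_primitive (nu p q p1 q1 : R) : R :=
  2 * (p * p1 + q * q1) / (p ^ 2 + q ^ 2) - 4 * nu * half_arg p q.

Lemma mass_primitive_scale (nu l p q p1 q1 : R) :
  0 < l -> (q = 0 -> 0 < p) ->
  mass_primitive nu (l * p) (l * q) (l * p1) (l * q1) = mass_primitive nu p q p1 q1.
Proof.
intros Hl Hp; pose proof (norm2_pos p q Hp).
unfold mass_primitive; rewrite half_arg_scale by lra.
replace ((l * p) ^ 2 + (l * q) ^ 2) with (l ^ 2 * (p ^ 2 + q ^ 2)) by ring.
f_equal; field; split; lra.
Qed.

Lemma mass_primitive_proportional (nu p q k : R) :
  (q = 0 -> 0 < p) -> mass_primitive nu p q (k * p) (k * q) = 2 * k - 4 * nu * half_arg p q.
Proof.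
intros Hp; pose proof (norm2_pos p q Hp).
unfold mass_primitive; f_equal; field; lra.
Qed.

Lemma mass_primitive_jump (nu b n : R) :
  mass_primitive nu (1 / 2) (- n) (b * (1 / 2)) (b * - n)
  - mass_primitive nu (1 / 2) 0 (- b * (1 / 2)) (- b * 0) = 4 * b + 2 * nu * atan (2 * n).
Proof.
rewrite !mass_primitive_proportional by (intros; lra); rewrite half_arg_0.
assert (Hh : half_arg (1 / 2) (- n) = - atan (2 * n) / 2).
{ rewrite <- atan_opp, <- half_arg_1, <- (half_arg_scale (1 / 2) 1 (- (2 * n))) by lra.
  replace (1 / 2 * 1) with (1 / 2) by ring; replace (1 / 2 * - (2 * n)) with (- n) by field.
  field. }
rewrite Hh; field.
Qed.

Section Primitive.

Variables (F G F1 G1 F2 G2 : R -> R) (nu : R).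
Hypotheses (dF : forall y, is_derive F y (F1 y)) (dG : forall y, is_derive G y (G1 y))
  (dF1 : forall y, is_derive F1 y (F2 y)) (dG1 : forall y, is_derive G1 y (G2 y))
  (F_pos : forall y, G y = 0 -> 0 < F y)
  (bilinear : forall y,
     F1 y ^ 2 + G1 y ^ 2 - F y * F2 y - G y * G2 y + nu * (F y * G1 y - G y * F1 y) = 0).

Lemma is_derive_log_norm2_derivative (y : R) :
  is_derive (fun z => 2 * (F z * F1 z + G z * G1 z) / (F z ^ 2 + G z ^ 2)) y
    (2 * ((F1 y ^ 2 + G1 y ^ 2 + (F y * F2 y + G y * G2 y)) * (F y ^ 2 + G y ^ 2)
          - 2 * (F y * F1 y + G y * G1 y) ^ 2) / (F y ^ 2 + G y ^ 2) ^ 2).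
Proof.
pose proof (norm2_pos _ _ (F_pos y)) as HD.
auto_derive.
{ repeat split; try (eexists; eauto);
  replace (F y * (F y * 1) + G y * (G y * 1)) with (F y ^ 2 + G y ^ 2) by ring; lra. }
change (Derive (fun z => F z) y) with (Derive F y).
change (Derive (fun z => G z) y) with (Derive G y).
change (Derive (fun z => F1 z) y) with (Derive F1 y).
change (Derive (fun z => G1 z) y) with (Derive G1 y).
rewrite (is_derive_unique _ _ _ (dF y)), (is_derive_unique _ _ _ (dG y)),
  (is_derive_unique _ _ _ (dF1 y)), (is_derive_unique _ _ _ (dG1 y)).
field; lra.
Qed.

Lemma is_derive_mass_primitive (y : R) :
  is_derive (fun z => mass_primitive nu (F z) (G z) (F1 z) (G1 z)) y
    (mass_density (F y) (G y) (F1 y) (G1 y)).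
Proof.
pose proof (norm2_pos _ _ (F_pos y)) as HD.
assert (Hd := is_derive_minus _ _ y _ _ (is_derive_log_norm2_derivative y)
  (is_derive_scal _ y (4 * nu) _ (is_derive_half_arg F G y _ _ (dF y) (dG y) (F_pos y)))).
unfold minus, plus, opp in Hd; simpl in Hd.
match type of Hd with is_derive _ _ ?d =>
  replace (mass_density (F y) (G y) (F1 y) (G1 y)) with d; [exact Hd |] end.
replace (F y * F2 y + G y * G2 y)
  with (F1 y ^ 2 + G1 y ^ 2 + nu * (F y * G1 y - G y * F1 y)) by (generalize (bilinear y); lra).
unfold mass_density; field; lra.
Qed.

Lemma is_RInt_gen_mass_density (L1 L2 : R) :
  is_lim (fun y => mass_primitive nu (F y) (G y) (F1 y) (G1 y)) m_infty L1 ->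
  is_lim (fun y => mass_primitive nu (F y) (G y) (F1 y) (G1 y)) p_infty L2 ->
  is_RInt_gen (fun y => mass_density (F y) (G y) (F1 y) (G1 y))
    (Rbar_locally m_infty) (Rbar_locally p_infty) (L2 - L1).
Proof.
intros lim_m lim_p.
set (P := fun y => mass_primitive nu (F y) (G y) (F1 y) (G1 y)).
assert (DP : forall y, Derive P y = mass_density (F y) (G y) (F1 y) (G1 y))
  by (intro y; apply is_derive_unique, is_derive_mass_primitive).
apply is_RInt_gen_ext with (f := Derive P).
{ apply filter_forall; intros ab z _; apply DP. }
apply is_RInt_gen_Derive; [| | exact lim_m | exact lim_p];
  apply filter_forall; intros ab z _.
- eexists; apply is_derive_mass_primitive.
- apply continuous_ext with (f := fun y => mass_density (F y) (G y) (F1 y) (G1 y)).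
  { intro y; symmetry; apply DP. }
  apply (@ex_derive_continuous R_AbsRing R_NormedModule).
  pose proof (norm2_pos _ _ (F_pos z)) as HD.
  unfold mass_density; auto_derive.
  repeat split; try (eexists; eauto).
  replace (F z * (F z * 1) + G z * (G z * 1)) with (F z ^ 2 + G z ^ 2) by ring.
  apply Rgt_not_eq, Rmult_lt_0_compat; lra.
Qed.

End Primitive.

Lemma is_lim_mult_finite (f g : R -> R) (x : Rbar) (l m : R) :
  is_lim f x l -> is_lim g x m -> is_lim (fun y => f y * g y) x (l * m).
Proof. intros Hf Hg; exact (is_lim_mult f g x l m Hf Hg I). Qed.

Lemma is_lim_div_finite (f g : R -> R) (x : Rbar) (l m : R) :
  is_lim f x l -> is_lim g x m -> m <> 0 -> is_lim (fun y => f y / g y) x (l / m).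
Proof.
intros Hf Hg Hm; apply (is_lim_div f g x l m Hf Hg); [congruence | exact I].
Qed.

Lemma is_lim_mass_primitive (f g f1 g1 : R -> R) (x : Rbar) (nu p q p1 q1 : R) :
  is_lim f x p -> is_lim g x q -> is_lim f1 x p1 -> is_lim g1 x q1 -> 0 < p ->
  is_lim (fun y => mass_primitive nu (f y) (g y) (f1 y) (g1 y)) x (mass_primitive nu p q p1 q1).
Proof.
intros Hf Hg Hf1 Hg1 Hp.
assert (HD : 0 < p ^ 2 + q ^ 2) by (apply norm2_pos; intros; lra).
assert (Hsq : forall (h : R -> R) (l : R), is_lim h x l -> is_lim (fun y => h y ^ 2) x (l ^ 2)).
{ intros h l Hh; rewrite <- Rsqr_pow2.
  apply is_lim_ext with (f := fun y => h y * h y); [intro; unfold Rsqr; ring |].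
  exact (is_lim_mult_finite _ _ _ _ _ Hh Hh). }
assert (Hnorm := is_lim_plus' _ _ _ _ _ (Hsq _ _ Hf) (Hsq _ _ Hg)).
unfold mass_primitive, half_arg.
apply is_lim_minus'.
- apply is_lim_div_finite; [| exact Hnorm | lra].
  apply is_lim_mult_finite; [apply is_lim_const |].
  apply is_lim_plus'; apply is_lim_mult_finite; assumption.
- apply is_lim_mult_finite; [apply is_lim_const |].
  apply (is_lim_comp_continuous _ atan); [| apply continuous_atan].
  apply is_lim_div_finite; [exact Hg | |].
  + apply is_lim_plus'; [| exact Hf].
    apply (is_lim_comp_continuous _ sqrt); [exact Hnorm | apply continuous_sqrt].
  + pose proof (sqrt_pos (p ^ 2 + q ^ 2)); lra.
Qed.

Lemma is_lim_mass_primitive_scaled (l F G F1 G1 : R -> R) (x : Rbar) (nu p q p1 q1 : R) :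
  (forall y, 0 < l y) -> (forall y, G y = 0 -> 0 < F y) ->
  is_lim (fun y => l y * F y) x p -> is_lim (fun y => l y * G y) x q ->
  is_lim (fun y => l y * F1 y) x p1 -> is_lim (fun y => l y * G1 y) x q1 -> 0 < p ->
  is_lim (fun y => mass_primitive nu (F y) (G y) (F1 y) (G1 y)) x (mass_primitive nu p q p1 q1).
Proof.
intros Hl Hpos Hf Hg Hf1 Hg1 Hp.
apply is_lim_ext with
  (f := fun y => mass_primitive nu (l y * F y) (l y * G y) (l y * F1 y) (l y * G1 y)).
{ intro y; apply mass_primitive_scale; auto. }
apply is_lim_mass_primitive; assumption.
Qed.

Lemma is_lim_bounded_mul (u e : R -> R) (x : Rbar) (C : R) :
  (forall y, Rabs (u y) <= C) -> is_lim e x 0 -> is_lim (fun y => u y * e y) x 0.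
Proof.
intros Hu He.
assert (Habs : is_lim (fun y => C * Rabs (e y)) x 0).
{ replace (Finite 0) with (Finite (C * Rabs 0)) by (rewrite Rabs_R0, Rmult_0_r; reflexivity).
  apply is_lim_mult_finite; [apply is_lim_const | exact (is_lim_Rabs _ _ _ He)]. }
apply is_lim_le_le_loc with (f := fun y => - (C * Rabs (e y))) (g := fun y => C * Rabs (e y)).
- apply filter_forall; intro y; apply Rabs_le_between.
  rewrite Rabs_mult; apply Rmult_le_compat_r; [apply Rabs_pos | apply Hu].
- replace (Finite 0) with (Finite (- 0)) by (rewrite Ropp_0; reflexivity).
  exact (is_lim_opp _ _ _ Habs).
- exact Habs.
Qed.

Lemma is_lim_scaled_profile (e u : R -> R) (x : Rbar) (c0 c1 C : R) :
  (forall y, e y <> 0) -> (forall y, Rabs (u y) <= C) -> is_lim e x 0 ->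
  is_lim (fun y => e y * (c1 * e y + u y + c0 / e y)) x c0.
Proof.
intros He Hu Hlim.
apply is_lim_ext with (f := fun y => c0 + u y * e y + c1 * (e y * e y)).
{ intro y; field; apply He. }
replace (Finite c0) with (Finite (c0 + 0 + c1 * (0 * 0))) by (f_equal; ring).
apply is_lim_plus';
  [apply is_lim_plus'; [apply is_lim_const | exact (is_lim_bounded_mul _ _ _ _ Hu Hlim)] |].
apply is_lim_mult_finite; [apply is_lim_const | exact (is_lim_mult_finite _ _ _ _ _ Hlim Hlim)].
Qed.

Lemma is_lim_exp_affine_m_infty (b c : R) :
  0 < b -> is_lim (fun y => exp (b * (y + c))) m_infty 0.
Proof.
intros Hb; apply (is_lim_comp exp _ m_infty 0 m_infty); [apply is_lim_exp_m | |].
- apply is_lim_spec; intros M; exists (M / b - c); intros y Hy; simpl.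
  replace M with (b * (M / b)) by (field; lra); apply Rmult_lt_compat_l; lra.
- apply filter_forall; discriminate.
Qed.

Lemma is_lim_inv_exp_affine_p_infty (b c : R) :
  0 < b -> is_lim (fun y => / exp (b * (y + c))) p_infty 0.
Proof.
intros Hb; apply is_lim_ext with (f := fun y => exp (- (b * (y + c)))).
{ intro; apply exp_Ropp. }
apply (is_lim_comp exp _ p_infty 0 m_infty); [apply is_lim_exp_m | |].
- apply is_lim_spec; intros M; exists (- M / b - c); intros y Hy; simpl.
  replace M with (- (b * (- M / b))) by (field; lra);
  apply Ropp_lt_contravar, Rmult_lt_compat_l; lra.
- apply filter_forall; discriminate.
Qed.

Lemma Rabs_trig_comb_le (k p q th : R) :
  Rabs (k * (p * cos th + q * sin th)) <= Rabs k * (Rabs p + Rabs q).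
Proof.
rewrite Rabs_mult; apply Rmult_le_compat_l; [apply Rabs_pos |].
eapply Rle_trans; [apply Rabs_triang |]; rewrite !Rabs_mult.
pose proof (Rabs_pos p); pose proof (Rabs_pos q).
assert (Rabs (cos th) <= 1) by (apply Rabs_le, COS_bound).
assert (Rabs (sin th) <= 1) by (apply Rabs_le, SIN_bound).
nra.
Qed.

(* The identity is a polynomial combination of the relations [s^2 + c^2 = 1],
   [r1^2 = a^2 + b^2] and [r2^2 = r1^2 - nu^2], with the coefficients given below. *)
Lemma breather_bilinear_identity (a b nu r1 r2 s c E K m n : R) :
  a <> 0 -> r1 <> 0 -> r2 <> 0 -> E <> 0 ->
  s ^ 2 + c ^ 2 = 1 -> r1 ^ 2 = a ^ 2 + b ^ 2 -> r2 ^ 2 = r1 ^ 2 - nu ^ 2 ->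
  K = nu * b / (a * r1 * r2) -> m = b * r1 / (a * r2) -> n = nu * b / r2 ^ 2 ->
  let F := (E + / E) / 2 - K * (a * c - b * s) in
  let G := m * s - n * E in
  let F1 := b * (E - / E) / 2 + K * a * (a * s + b * c) in
  let G1 := m * a * c - n * b * E in
  let F2 := b ^ 2 * (E + / E) / 2 + K * a ^ 2 * (a * c - b * s) in
  let G2 := - m * a ^ 2 * s - n * b ^ 2 * E in
  F1 ^ 2 + G1 ^ 2 - F * F2 - G * G2 + nu * (F * G1 - G * F1) = 0.
Proof.
intros Ha H1 H2 HE Hsc Hr1 Hr2 HK Hm Hn; subst K m n; cbv zeta.
assert (Hd : a * r1 ^ 2 * r2 ^ 3 * E <> 0)
  by (repeat apply Rmult_integral_contrapositive_currified; try apply pow_nonzero; auto).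
apply (Rmult_eq_reg_r (a * r1 ^ 2 * r2 ^ 3 * E)); [rewrite Rmult_0_l | exact Hd].
transitivity
  ((a*b^2*r1^4*r2*E - a*b^2*nu^2*r1^2*r2*E + a*b^4*nu^2*r2*E + a^3*b^2*nu^2*r2*E)
     * (c^2 + s^2 - 1)
 + ((1/2)*b^2*nu*r1*r2^2*s - (1/2)*b^2*nu*r1*r2^2*s*E^2 + (1/2)*a*b*nu*r1*r2^2*c
    + (1/2)*a*b*nu*r1*r2^2*c*E^2 - a*b^2*r2^3*E + a*b^2*r1^2*r2*E - 2*a*b^2*nu^2*r2*E)
     * (r1^2 - a^2 - b^2)
 + (- b^4*nu*r1*s*E^2 + 2*a*b^3*nu*r1*c*E^2 - a*b^4*r2*E + a^2*b^2*nu*r1*s*E^2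
    - a^3*b^2*r2*E)
     * (r2^2 - r1^2 + nu^2)).
- field; auto.
- replace (c^2 + s^2 - 1) with 0 by lra; replace (r1^2 - a^2 - b^2) with 0 by lra;
  replace (r2^2 - r1^2 + nu^2) with 0 by lra; ring.
Qed.

Lemma inv_sum_sq_sub_pos (E c q : R) :
  0 < E -> -1 <= c <= 1 -> 0 < (E + / E) / 2 + q ^ 2 * E - q * c.
Proof.
intros HE Hc.
assert (Hqc : q * c <= Rabs q).
{ eapply Rle_trans; [apply Rle_abs |]; rewrite Rabs_mult.
  pose proof (Rabs_pos q); assert (Rabs c <= 1) by (apply Rabs_le; lra); nra. }
assert (Hsq : E * ((E + / E) / 2 + q ^ 2 * E - Rabs q)
             = (Rabs q * E - 1 / 2) ^ 2 + 1 / 4 + E ^ 2 / 2).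
{ rewrite <- (pow2_abs q); field; lra. }
assert (0 < (E + / E) / 2 + q ^ 2 * E - Rabs q).
{ apply (Rmult_lt_reg_l E); [exact HE |]; rewrite Rmult_0_r, Hsq; nra. }
lra.
Qed.

Section Breather.

Variables (a b mu x1 x2 t : R).

Definition gb_E (y : R) : R := exp (b * gb_y2 a b x2 t y).
Definition gb_theta (y : R) : R := a * gb_y1 a b x1 t y.
Definition gb_K : R := sqrt 2 * mu * b / (a * sqrt (a ^ 2 + b ^ 2) * sqrt (gb_Delta a b mu)).
Definition gb_m : R := b * sqrt (a ^ 2 + b ^ 2) / (a * sqrt (gb_Delta a b mu)).
Definition gb_n : R := sqrt 2 * mu * b / gb_Delta a b mu.

Definition gb_F' (y : R) : R :=
  b * (gb_E y - / gb_E y) / 2 + gb_K * a * (a * sin (gb_theta y) + b * cos (gb_theta y)).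
Definition gb_G' (y : R) : R := gb_m * a * cos (gb_theta y) - gb_n * b * gb_E y.
Definition gb_F'' (y : R) : R :=
  b ^ 2 * (gb_E y + / gb_E y) / 2 + gb_K * a ^ 2 * (a * cos (gb_theta y) - b * sin (gb_theta y)).
Definition gb_G'' (y : R) : R := - gb_m * a ^ 2 * sin (gb_theta y) - gb_n * b ^ 2 * gb_E y.

Local Notation F := (gb_F a b mu x1 x2 t).
Local Notation G := (gb_G a b mu x1 x2 t).

Lemma gb_F_eq (y : R) :
  F y = (gb_E y + / gb_E y) / 2 - gb_K * (a * cos (gb_theta y) - b * sin (gb_theta y)).
Proof. unfold gb_F, gb_E, gb_theta, gb_K, cosh; rewrite exp_Ropp; unfold Rdiv; ring. Qed.

Lemma gb_G_eq (y : R) : G y = gb_m * sin (gb_theta y) - gb_n * gb_E y.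
Proof. unfold gb_G, gb_E, gb_theta, gb_m, gb_n, Rdiv; ring. Qed.

Ltac solve_gb_derive :=
  unfold gb_E, gb_theta, gb_y1, gb_y2; auto_derive;
  first [exact I | apply Rgt_not_eq, exp_pos | field; apply Rgt_not_eq, exp_pos | field].

Lemma is_derive_gb_F (y : R) : is_derive F y (gb_F' y).
Proof.
apply is_derive_ext with (f := fun z =>
  (gb_E z + / gb_E z) / 2 - gb_K * (a * cos (gb_theta z) - b * sin (gb_theta z))).
{ intro; symmetry; apply gb_F_eq. }
unfold gb_F'; solve_gb_derive.
Qed.

Lemma is_derive_gb_G (y : R) : is_derive G y (gb_G' y).
Proof.
apply is_derive_ext with (f := fun z => gb_m * sin (gb_theta z) - gb_n * gb_E z).
{ intro; symmetry; apply gb_G_eq. }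
unfold gb_G'; solve_gb_derive.
Qed.

Lemma is_derive_gb_F' (y : R) : is_derive gb_F' y (gb_F'' y).
Proof. unfold gb_F', gb_F''; solve_gb_derive. Qed.

Lemma is_derive_gb_G' (y : R) : is_derive gb_G' y (gb_G'' y).
Proof. unfold gb_G', gb_G''; solve_gb_derive. Qed.

Hypotheses (Ha : a <> 0) (Hb : 0 < b) (HDelta : 0 < gb_Delta a b mu).

Lemma gb_bilinear (y : R) :
  gb_F' y ^ 2 + gb_G' y ^ 2 - F y * gb_F'' y - G y * gb_G'' y
  + sqrt 2 * mu * (F y * gb_G' y - G y * gb_F' y) = 0.
Proof.
assert (Hab : 0 < a ^ 2 + b ^ 2) by (pose proof (pow2_gt_0 a Ha); nra).
rewrite gb_F_eq, gb_G_eq; unfold gb_F', gb_G', gb_F'', gb_G''.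
apply breather_bilinear_identity with (r1 := sqrt (a ^ 2 + b ^ 2)) (r2 := sqrt (gb_Delta a b mu)).
- exact Ha.
- apply Rgt_not_eq, sqrt_lt_R0, Hab.
- apply Rgt_not_eq, sqrt_lt_R0, HDelta.
- apply Rgt_not_eq, exp_pos.
- rewrite <- !Rsqr_pow2; apply sin2_cos2.
- apply pow2_sqrt; lra.
- rewrite !pow2_sqrt, Rpow_mult_distr, pow2_sqrt by lra; unfold gb_Delta; ring.
- reflexivity.
- reflexivity.
- unfold gb_n; rewrite pow2_sqrt by lra; reflexivity.
Qed.

(* On the zero set of [G] the sine is a multiple of [gb_E], which turns [F] into the
   form of [inv_sum_sq_sub_pos]. *)
Lemma gb_F_pos (y : R) : G y = 0 -> 0 < F y.
Proof.
rewrite gb_F_eq, gb_G_eq; intros HG.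
assert (Hr1 : 0 < sqrt (a ^ 2 + b ^ 2)) by (apply sqrt_lt_R0; pose proof (pow2_gt_0 a Ha); nra).
assert (Hr2 : 0 < sqrt (gb_Delta a b mu)) by (apply sqrt_lt_R0, HDelta).
assert (Hm : gb_m <> 0).
{ unfold gb_m, Rdiv; repeat apply Rmult_integral_contrapositive_currified;
  try apply Rinv_neq_0_compat; try apply Rmult_integral_contrapositive_currified; lra. }
assert (Hs : sin (gb_theta y) = gb_n * gb_E y / gb_m) by (field_simplify_eq; lra).
set (q := sqrt 2 * mu * b / (sqrt (a ^ 2 + b ^ 2) * sqrt (gb_Delta a b mu))).
replace (gb_K * (a * cos (gb_theta y) - b * sin (gb_theta y)))
  with (q * cos (gb_theta y) - q ^ 2 * gb_E y).
- pose proof (inv_sum_sq_sub_pos (gb_E y) (cos (gb_theta y)) q (exp_pos _) (COS_bound _)); lra.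
- rewrite Hs; unfold q, gb_K, gb_n, gb_m.
  assert (HD2 := sqrt_sqrt _ (Rlt_le _ _ HDelta)).
  set (r2 := sqrt (gb_Delta a b mu)) in *; rewrite <- HD2.
  field; repeat split; lra.
Qed.

Lemma is_lim_gb_profile (f u : R -> R) (c0 c1 C : R) :
  (forall y, Rabs (u y) <= C) -> (forall y, f y = c1 * gb_E y + u y + c0 / gb_E y) ->
  is_lim (fun y => gb_E y * f y) m_infty c0 /\ is_lim (fun y => / gb_E y * f y) p_infty c1.
Proof.
intros Hu Hf.
assert (HE : forall y, gb_E y = exp (b * (y + (gb_gamma a b * t + x2))))
  by (intro; unfold gb_E, gb_y2; do 2 f_equal; ring).
assert (HE0 : forall y, gb_E y <> 0) by (intro; apply Rgt_not_eq, exp_pos).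
split.
- apply is_lim_ext with (f := fun y => gb_E y * (c1 * gb_E y + u y + c0 / gb_E y)).
  { intro; rewrite Hf; reflexivity. }
  apply is_lim_scaled_profile with (C := C); [exact HE0 | exact Hu |].
  apply is_lim_ext with (f := fun y => exp (b * (y + (gb_gamma a b * t + x2)))).
  { intro; symmetry; apply HE. }
  apply is_lim_exp_affine_m_infty, Hb.
- apply is_lim_ext with (f := fun y => / gb_E y * (c0 * / gb_E y + u y + c1 / / gb_E y)).
  { intro; rewrite Hf; f_equal; field; apply HE0. }
  apply is_lim_scaled_profile with (C := C); [intro; apply Rinv_neq_0_compat, HE0 | exact Hu |].
  apply is_lim_ext with (f := fun y => / exp (b * (y + (gb_gamma a b * t + x2)))).
  { intro; rewrite HE; reflexivity. }
  apply is_lim_inv_exp_affine_p_infty, Hb.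
Qed.

Lemma is_lim_gb_mass_primitive (nu : R) :
  is_lim (fun y => mass_primitive nu (F y) (G y) (gb_F' y) (gb_G' y)) m_infty
    (mass_primitive nu (1 / 2) 0 (- b * (1 / 2)) (- b * 0)) /\
  is_lim (fun y => mass_primitive nu (F y) (G y) (gb_F' y) (gb_G' y)) p_infty
    (mass_primitive nu (1 / 2) (- gb_n) (b * (1 / 2)) (b * - gb_n)).
Proof.
assert (HE : forall y, gb_E y <> 0) by (intro; apply Rgt_not_eq, exp_pos).
destruct (is_lim_gb_profile F (fun y => - gb_K * (a * cos (gb_theta y) + - b * sin (gb_theta y)))
  (1 / 2) (1 / 2) _ (fun y => Rabs_trig_comb_le _ _ _ _)) as [Fm Fp].
{ intro y; rewrite gb_F_eq; field; apply HE. }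
destruct (is_lim_gb_profile G (fun y => gb_m * (0 * cos (gb_theta y) + 1 * sin (gb_theta y)))
  0 (- gb_n) _ (fun y => Rabs_trig_comb_le _ _ _ _)) as [Gm Gp].
{ intro y; rewrite gb_G_eq; field; apply HE. }
destruct (is_lim_gb_profile gb_F'
  (fun y => gb_K * a * (b * cos (gb_theta y) + a * sin (gb_theta y)))
  (- b * (1 / 2)) (b * (1 / 2)) _ (fun y => Rabs_trig_comb_le _ _ _ _)) as [F'm F'p].
{ intro y; unfold gb_F'; field; apply HE. }
destruct (is_lim_gb_profile gb_G'
  (fun y => gb_m * a * (1 * cos (gb_theta y) + 0 * sin (gb_theta y)))
  (- b * 0) (b * - gb_n) _ (fun y => Rabs_trig_comb_le _ _ _ _)) as [G'm G'p].
{ intro y; unfold gb_G'; field; apply HE. }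
split.
- apply (is_lim_mass_primitive_scaled gb_E); try assumption;
    [intro; apply exp_pos | exact gb_F_pos | lra].
- apply (is_lim_mass_primitive_scaled (fun y => / gb_E y)); try assumption;
    [intro; apply Rinv_0_lt_compat, exp_pos | exact gb_F_pos | lra].
Qed.

Lemma gb_mass_density (y : R) :
  / 2 * breather a b mu x1 x2 t y ^ 2 = mass_density (F y) (G y) (gb_F' y) (gb_G' y).
Proof.
pose proof (norm2_pos _ _ (gb_F_pos y)) as HD.
unfold breather, mass_density; cbv beta zeta.
change (Derive (fun z => F z) y) with (Derive F y).
change (Derive (fun z => G z) y) with (Derive G y).
rewrite (is_derive_unique _ _ _ (is_derive_gb_F y)), (is_derive_unique _ _ _ (is_derive_gb_G y)).
unfold Rdiv; rewrite !Rpow_mult_distr, pow2_sqrt by lra.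
field; lra.
Qed.

End Breather.

Theorem lemma2p2 (a b mu x1 x2 : R) :
  a <> 0 -> 0 < b -> mu <> 0 -> 0 < gb_Delta a b mu ->
  forall t : R,
  is_RInt_gen (fun x => / 2 * (breather a b mu x1 x2 t x) ^ 2)
    (Rbar_locally m_infty) (Rbar_locally p_infty)
    (4 * b + 2 * sqrt 2 * mu * atan (2 * sqrt 2 * mu * b / gb_Delta a b mu)).
Proof.
intros Ha Hb _ HDelta t.
destruct (is_lim_gb_mass_primitive a b mu x1 x2 t Ha Hb HDelta (sqrt 2 * mu)) as [Lm Lp].
generalize (is_RInt_gen_mass_density _ _ _ _ _ _ (sqrt 2 * mu)
  (is_derive_gb_F a b mu x1 x2 t) (is_derive_gb_G a b mu x1 x2 t)
  (is_derive_gb_F' a b mu x1 x2 t) (is_derive_gb_G' a b mu x1 x2 t)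
  (gb_F_pos a b mu x1 x2 t Ha Hb HDelta) (gb_bilinear a b mu x1 x2 t Ha HDelta) _ _ Lm Lp).
rewrite mass_primitive_jump.
replace (2 * sqrt 2 * mu * b / gb_Delta a b mu) with (2 * gb_n a b mu) by (unfold gb_n; field; lra).
replace (2 * sqrt 2 * mu) with (2 * (sqrt 2 * mu)) by ring.
apply is_RInt_gen_ext, filter_forall; intros _ y _.
symmetry; apply gb_mass_density; assumption.
Qed.
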